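(* Let $\mathbb{T}$ be a finitary algebraic theory such that the associated variety of algebras $\mathbb{V}(\mathbb{T})$ is pointed protomodular. If $\mathbb{V}(\mathbb{T})$ satisfies (Huq=Smith), then for every finitely complete category $\mathbb{E}$, the category $\mathbb{T}(\mathbb{E})$ of internal $\mathbb{T}$-algebras in $\mathbb{E}$ satisfies (Huq=Smith).
   Context: For a finitely complete category $\mathbb{E}$, $\mathbb{T}(\mathbb{E})$ is the category of internal $\mathbb{T}$-algebras: objects $X$ of $\mathbb{E}$ with morphisms $X^n\to X$ for each $n$-ary operation of $\mathbb{T}$ satisfying the equations of $\mathbb{T}$, and morphisms commuting with the operations. A finitely complete category is pointed if it has a zero object. A pointed category is protomodular if for every split epimorphism $f\colon X\to Y$ with section $s$ ($fs=1_Y$), the kernel $k_f\colon \mathrm{Ker} f\to X$ and $s$ are jointly strongly epic (the only subobject of $X$ through which both factor is $X$ itself); pointed protomodular categories are Mal'tsev (every reflexive relation is an equivalence relation). In a pointed category, for an equivalence relation $R$ on $X$ with projections $d_0,d_1$, $I_R\rightarrowtail X$ is $d_1\circ\bar x$, where $\bar x\colon I_R\to R$ is the pullback of $d_0$ along $0\to X$. Subobjects $u\colon U\rightarrowtail X$, $v\colon V\rightarrowtail X$ cooperate, $[u,v]=0$, if there is $\varphi\colon U\times V\to X$ with $\varphi\langle 1_U,0\rangle=u$, $\varphi\langle 0,1_V\rangle=v$. For equivalence relations $R,S$ on $X$, $R\times_X S$ is the pullback of $d_1^R$ and $d_0^S$ (triples $xRySz$), with $l_R(xRy)=xRySy$,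 $r_S(ySz)=yRySz$; $[R,S]=0$ means there is $p\colon R\times_XS\to X$ with $pr_S=d_1^S$, $pl_R=d_0^R$. A pointed Mal'tsev category satisfies (Huq=Smith) if for every $X$ and all equivalence relations $R,S$ on $X$, $[I_R,I_S]=0$ implies $[R,S]=0$. *)

From Stdlib Require Import Fin FunctionalExtensionality ProofIrrelevance.

Set Implicit Arguments.
Unset Strict Implicit.

(* Equality of morphisms is Leibniz equality.                            *)
Record Cat := {
  Ob :> Type;
  Hom : Ob -> Ob -> Type;
  cmp : forall A B D, Hom B D -> Hom A B -> Hom A D;
  idm : forall A, Hom A A }.
Arguments Hom {c} _ _.
Arguments cmp {c A B D} _ _.
Arguments idm {c} A.
Notation "g ∘ f" := (cmp g f) (at level 40, left associativity).

Definition IsCat (C : Cat) : Prop :=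
  (forall (A B D E : C) (h : Hom D E) (g : Hom B D) (f : Hom A B),
      h ∘ (g ∘ f) = (h ∘ g) ∘ f) /\
  (forall (A B : C) (f : Hom A B), idm B ∘ f = f) /\
  (forall (A B : C) (f : Hom A B), f ∘ idm A = f).

Section Notions.
Variable C : Cat.

Definition is_pullback {X Y Z P : C} (f : Hom X Z) (g : Hom Y Z)
    (p1 : Hom P X) (p2 : Hom P Y) : Prop :=
  f ∘ p1 = g ∘ p2 /\
  forall (Q : C) (h : Hom Q X) (k : Hom Q Y), f ∘ h = g ∘ k ->
    exists u : Hom Q P, p1 ∘ u = h /\ p2 ∘ u = k /\
      forall u' : Hom Q P, p1 ∘ u' = h -> p2 ∘ u' = k -> u' = u.

Definition is_product {A B P : C} (p1 : Hom P A) (p2 : Hom P B) : Prop :=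
  forall (Q : C) (h : Hom Q A) (k : Hom Q B),
    exists u : Hom Q P, p1 ∘ u = h /\ p2 ∘ u = k /\
      forall u' : Hom Q P, p1 ∘ u' = h -> p2 ∘ u' = k -> u' = u.

Definition is_zero_obj (Z : C) : Prop :=
  forall X : C,
    (exists f : Hom Z X, forall g : Hom Z X, g = f) /\
    (exists f : Hom X Z, forall g : Hom X Z, g = f).

Definition Pointed : Prop := exists Z : C, is_zero_obj Z.

Definition is_zero_mor {A B : C} (f : Hom A B) : Prop :=
  exists (Z : C) (a : Hom A Z) (b : Hom Z B), is_zero_obj Z /\ f = b ∘ a.

Definition is_mono {A B : C} (m : Hom A B) : Prop :=
  forall (Q : C) (a b : Hom Q A), m ∘ a = m ∘ b -> a = b.

Definition is_iso {A B : C} (m : Hom A B) : Prop :=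
  exists n : Hom B A, n ∘ m = idm A /\ m ∘ n = idm B.

Definition is_kernel {X Y K : C} (f : Hom X Y) (k : Hom K X) : Prop :=
  exists (Z : C) (z : Hom Z Y) (t : Hom K Z), is_zero_obj Z /\ is_pullback f z k t.

(* Pointed protomodularity: for every split epi f with section s, the kernel
   of f and s are jointly strongly epic: a subobject (mono) of X through which
   both factor is an isomorphism. *)
Definition Protomodular : Prop :=
  forall (X Y : C) (f : Hom X Y) (s : Hom Y X), f ∘ s = idm Y ->
  forall (K : C) (k : Hom K X), is_kernel f k ->
  forall (M : C) (m : Hom M X), is_mono m ->
    (exists a : Hom K M, m ∘ a = k) -> (exists b : Hom Y M, m ∘ b = s) ->
    is_iso m.

Definition is_eqrel {X R : C} (d0 d1 : Hom R X) : Prop :=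
  (forall (Q : C) (a b : Hom Q R), d0 ∘ a = d0 ∘ b -> d1 ∘ a = d1 ∘ b -> a = b) /\
  (exists r : Hom X R, d0 ∘ r = idm X /\ d1 ∘ r = idm X) /\
  (exists s : Hom R R, d0 ∘ s = d1 /\ d1 ∘ s = d0) /\
  (forall (P : C) (p1 p2 : Hom P R), is_pullback d1 d0 p1 p2 ->
     exists t : Hom P R, d0 ∘ t = d0 ∘ p1 /\ d1 ∘ t = d1 ∘ p2).

Definition cooperate {U V X : C} (u : Hom U X) (v : Hom V X) : Prop :=
  exists (P : C) (p1 : Hom P U) (p2 : Hom P V) (m1 : Hom U P) (m2 : Hom V P)
         (phi : Hom P X),
    is_product p1 p2 /\
    p1 ∘ m1 = idm U /\ is_zero_mor (p2 ∘ m1) /\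
    is_zero_mor (p1 ∘ m2) /\ p2 ∘ m2 = idm V /\
    phi ∘ m1 = u /\ phi ∘ m2 = v.

Definition centralize {X R S : C} (d0R d1R : Hom R X) (d0S d1S : Hom S X) : Prop :=
  exists (P : C) (q1 : Hom P R) (q2 : Hom P S) (eR : Hom X R) (eS : Hom X S)
         (lR : Hom R P) (rS : Hom S P) (p : Hom P X),
    is_pullback d1R d0S q1 q2 /\
    d0R ∘ eR = idm X /\ d1R ∘ eR = idm X /\
    d0S ∘ eS = idm X /\ d1S ∘ eS = idm X /\
    q1 ∘ lR = idm R /\ q2 ∘ lR = eS ∘ d1R /\
    q1 ∘ rS = eR ∘ d0S /\ q2 ∘ rS = idm S /\
    p ∘ rS = d1S /\ p ∘ lR = d0R.

Definition HuqSmith : Prop :=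
  forall (X R S : C) (d0R d1R : Hom R X) (d0S d1S : Hom S X),
    is_eqrel d0R d1R -> is_eqrel d0S d1S ->
  forall (Z : C) (zX : Hom Z X), is_zero_obj Z ->
  forall (IR : C) (xR : Hom IR R) (tR : Hom IR Z), is_pullback d0R zX xR tR ->
  forall (IS : C) (xS : Hom IS S) (tS : Hom IS Z), is_pullback d0S zX xS tS ->
    cooperate (d1R ∘ xR) (d1S ∘ xS) -> centralize d0R d1R d0S d1S.

End Notions.

Record FinLim (C : Cat) := {
  term : Ob C;
  bang : forall X : C, Hom X term;
  bang_uniq : forall (X : C) (f : Hom X term), f = bang X;
  prd : C -> C -> C;
  pr1 : forall A B : C, Hom (prd A B) A;
  pr2 : forall A B : C, Hom (prd A B) B;
  pair : forall (Z A B : C), Hom Z A -> Hom Z B -> Hom Z (prd A B);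
  pr1_pair : forall (Z A B : C) (f : Hom Z A) (g : Hom Z B), pr1 A B ∘ pair f g = f;
  pr2_pair : forall (Z A B : C) (f : Hom Z A) (g : Hom Z B), pr2 A B ∘ pair f g = g;
  pair_uniq : forall (Z A B : C) (h : Hom Z (prd A B)),
      h = pair (pr1 A B ∘ h) (pr2 A B ∘ h);
  has_pb : forall (X Y Z : C) (f : Hom X Z) (g : Hom Y Z),
      exists (P : C) (p1 : Hom P X) (p2 : Hom P Y), is_pullback f g p1 p2 }.
Arguments term {C} _.
Arguments bang {C} _ _.
Arguments prd {C} _ _ _.
Arguments pr1 {C} _ _ _.
Arguments pr2 {C} _ _ _.
Arguments pair {C} _ {Z A B} _ _.
Arguments pair_uniq {C} _ {Z A B} _.
Arguments pr1_pair {C} _ {Z A B} _ _.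
Arguments pr2_pair {C} _ {Z A B} _ _.
Arguments bang_uniq {C} _ {X} _.

Record Signature := { Op : Type; arity : Op -> nat }.

Inductive Term (Sg : Signature) (n : nat) : Type :=
| Var : Fin.t n -> Term Sg n
| App : forall o : Op Sg, (Fin.t (arity o) -> Term Sg n) -> Term Sg n.

Record Theory := {
  sig :> Signature;
  eqns : forall n : nat, Term sig n -> Term sig n -> Prop }.

Section Internal.
Variables (C : Cat) (HC : IsCat C) (L : FinLim C).

Fixpoint pow (X : C) (n : nat) : C :=
  match n with 0 => term L | S m => prd L X (pow X m) end.

Fixpoint proj (X : C) {n : nat} (i : Fin.t n) : Hom (pow X n) X :=
  match i in Fin.t n return Hom (pow X n) X with
  | Fin.F1 => pr1 L X _
  | @Fin.FS m j => proj X j ∘ pr2 L X (pow X m)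
  end.

Fixpoint tuple (X Y : C) (n : nat) : (Fin.t n -> Hom Y X) -> Hom Y (pow X n) :=
  match n return (Fin.t n -> Hom Y X) -> Hom Y (pow X n) with
  | 0 => fun _ => bang L Y
  | S m => fun fs => pair L (fs Fin.F1) (tuple (fun i => fs (Fin.FS i)))
  end.

Definition powmap {X Y : C} (f : Hom X Y) (n : nat) : Hom (pow X n) (pow Y n) :=
  tuple (fun i => f ∘ proj X i).

Variable T : Theory.

Record IAlg := { car : C; act : forall o : Op T, Hom (pow car (arity o)) car }.

Fixpoint interp (A : IAlg) {n : nat} (t : Term T n) : Hom (pow (car A) n) (car A) :=
  match t with
  | @Var _ _ i => proj (car A) i
  | @App _ _ o ts => act A o ∘ tuple (fun i => interp A (ts i))
  end.

Definition satisfies (A : IAlg) : Prop :=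
  forall n (t1 t2 : Term T n), @eqns T n t1 t2 -> interp A t1 = interp A t2.

Definition is_alg_hom (A B : IAlg) (f : Hom (car A) (car B)) : Prop :=
  forall o : Op T, f ∘ act A o = act B o ∘ powmap f (arity o).

Lemma tuple_ext {X Y : C} n (fs gs : Fin.t n -> Hom Y X) :
  (forall i, fs i = gs i) -> tuple fs = tuple gs.
Proof.
  induction n as [|n IH]; simpl; intros H; [reflexivity|].
  rewrite H; f_equal; apply IH; intros i; apply H.
Qed.

Lemma pair_comp {Z Z' A B : C} (f : Hom Z A) (g : Hom Z B) (h : Hom Z' Z) :
  pair L f g ∘ h = pair L (f ∘ h) (g ∘ h).
Proof.
  destruct HC as [assoc _].
  rewrite (pair_uniq L (pair L f g ∘ h)), !assoc, (pr1_pair L), (pr2_pair L). reflexivity.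
Qed.

Lemma proj_tuple {X Y : C} n (i : Fin.t n) (fs : Fin.t n -> Hom Y X) :
  proj X i ∘ tuple fs = fs i.
Proof.
  destruct HC as [assoc _].
  induction i as [n|n i IH]; simpl.
  - apply (pr1_pair L).
  - rewrite <- assoc, (pr2_pair L). apply (IH (fun j => fs (Fin.FS j))).
Qed.

Lemma tuple_eta {X Y : C} n (h : Hom Y (pow X n)) :
  h = tuple (fun i => proj X i ∘ h).
Proof.
  destruct HC as [assoc _].
  induction n as [|n IH]; simpl.
  - apply (bang_uniq L).
  - rewrite (pair_uniq L h) at 1. f_equal.
    rewrite (IH (pr2 L X (pow X n) ∘ h)) at 1.
    apply tuple_ext; intros i; apply assoc.
Qed.

Lemma proj_ext {X Y : C} n (g h : Hom Y (pow X n)) :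
  (forall i, proj X i ∘ g = proj X i ∘ h) -> g = h.
Proof.
  intros H. rewrite (tuple_eta g), (tuple_eta h). apply tuple_ext, H.
Qed.

Lemma powmap_comp {X Y W : C} (f : Hom X Y) (g : Hom Y W) n :
  powmap (g ∘ f) n = powmap g n ∘ powmap f n.
Proof.
  destruct HC as [assoc _].
  apply proj_ext; intros i. unfold powmap.
  rewrite proj_tuple, assoc, proj_tuple, <- !assoc, proj_tuple. reflexivity.
Qed.

Lemma powmap_id (X : C) n : powmap (idm X) n = idm (pow X n).
Proof.
  destruct HC as [_ [idl idr]].
  apply proj_ext; intros i. unfold powmap. rewrite proj_tuple, idl, idr. reflexivity.
Qed.

Lemma alg_hom_comp (A B D : IAlg) (f : Hom (car A) (car B)) (g : Hom (car B) (car D)) :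
  is_alg_hom f -> is_alg_hom g -> is_alg_hom (g ∘ f).
Proof.
  destruct HC as [assoc _]. intros Hf Hg o.
  rewrite <- assoc, Hf, assoc, Hg, <- assoc, <- powmap_comp. reflexivity.
Qed.

Lemma alg_hom_id (A : IAlg) : is_alg_hom (idm (car A)).
Proof.
  destruct HC as [_ [idl idr]]. intros o. rewrite powmap_id, idl, idr. reflexivity.
Qed.

Definition TAlg : Cat := {|
  Ob := { A : IAlg | satisfies A };
  Hom := fun A B => { f : Hom (car (proj1_sig A)) (car (proj1_sig B)) | is_alg_hom f };
  cmp := fun A B D g f =>
    exist _ (proj1_sig g ∘ proj1_sig f) (alg_hom_comp (proj2_sig f) (proj2_sig g));
  idm := fun A => exist _ (idm _) (alg_hom_id (proj1_sig A)) |}.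

End Internal.

Definition SetCat : Cat := {|
  Ob := Type;
  Hom := fun A B => A -> B;
  cmp := fun A B D g f x => g (f x);
  idm := fun A x => x |}.

Lemma SetCat_isCat : IsCat SetCat.
Proof. repeat split. Qed.

Lemma SetCat_pb (X Y Z : SetCat) (f : Hom X Z) (g : Hom Y Z) :
  exists (P : SetCat) (p1 : Hom P X) (p2 : Hom P Y), is_pullback f g p1 p2.
Proof.
  exists {p : (X : Type) * (Y : Type) | f (fst p) = g (snd p)}.
  exists (fun p => fst (proj1_sig p)), (fun p => snd (proj1_sig p)).
  split.
  - apply functional_extensionality; intros [p e]; exact e.
  - intros Q h k E.
    exists (fun q => exist _ (h q, k q) (f_equal (fun F => F q) E)).
    repeat split.
    intros u' E1 E2. apply functional_extensionality; intros q.
    destruct (u' q) as [[a b] e] eqn:Hu.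
    assert (a = h q) by (rewrite <- E1; simpl; rewrite Hu; reflexivity).
    assert (b = k q) by (rewrite <- E2; simpl; rewrite Hu; reflexivity).
    subst. f_equal. apply proof_irrelevance.
Qed.

Definition SetFinLim : FinLim SetCat.
Proof.
  refine {| term := (unit : SetCat);
            bang := fun X (_ : X) => tt;
            prd := fun A B => ((A : Type) * (B : Type))%type;
            pr1 := fun A B (p : (A : Type) * (B : Type)) => fst p;
            pr2 := fun A B (p : (A : Type) * (B : Type)) => snd p;
            pair := fun Z A B (f : Z -> A) (g : Z -> B) (z : Z) => (f z, g z);
            has_pb := SetCat_pb |}.
  - intros X f; apply functional_extensionality; intros x; destruct (f x); reflexivity.
  - reflexivity.
  - reflexivity.
  - intros Z A B h; apply functional_extensionality; intros z; simpl;
      destruct (h z); reflexivity.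
Defined.

Definition Variety (T : Theory) : Cat := TAlg SetCat_isCat SetFinLim T.

(* For every object Q of E, the hom-functor Hom(Q, -) sends internal T-algebras to
   T-algebras and preserves pullbacks, products, zero objects, equivalence relations and
   cooperating subobjects.  So if [I_R, I_S] = 0 in T(E), (Huq=Smith) in V(T) yields for
   every Q a connector p_Q : Hom(Q, R ×_X S) -> Hom(Q, X).  In the pointed protomodular
   variety V(T) the maps l_R and r_S are jointly epic, so connectors are unique; hence the
   p_Q are natural in Q and, by Yoneda, induced by one homomorphism of internal algebras
   p : R ×_X S -> X, which is the connector witnessing [R, S] = 0. *)

From Stdlib Require Import FunctionalExtensionality ProofIrrelevance ClassicalEpsilon.
Set Implicit Arguments.
Unset Strict Implicit.

Lemma proj1_sig_inj (A : Type) (P : A -> Prop) (x y : {a : A | P a}) :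
  proj1_sig x = proj1_sig y -> x = y.
Proof. destruct x, y; simpl; intros ->; f_equal; apply proof_irrelevance. Qed.

Definition has_pullbacks (C : Cat) : Prop :=
  forall (X Y Z : C) (f : Hom X Z) (g : Hom Y Z),
    exists (P : C) (p1 : Hom P X) (p2 : Hom P Y), is_pullback f g p1 p2.

Definition has_equalizers (C : Cat) : Prop :=
  forall (X Y : C) (a b : Hom X Y), exists (M : C) (m : Hom M X),
    is_mono m /\ a ∘ m = b ∘ m /\
    forall (W : C) (x : Hom W X), a ∘ x = b ∘ x -> exists y : Hom W M, m ∘ y = x.

Section CategoryFacts.
Variables (C : Cat) (HC : IsCat C).

Lemma cmp_assoc (A B D F : C) (h : Hom D F) (g : Hom B D) (f : Hom A B) :
  h ∘ (g ∘ f) = h ∘ g ∘ f.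
Proof. apply (proj1 HC). Qed.

Lemma cmp_idl (A B : C) (f : Hom A B) : idm B ∘ f = f.
Proof. apply (proj1 (proj2 HC)). Qed.

Lemma cmp_idr (A B : C) (f : Hom A B) : f ∘ idm A = f.
Proof. apply (proj2 (proj2 HC)). Qed.

Lemma pullback_jointly_monic (X Y Z P : C) (f : Hom X Z) (g : Hom Y Z)
    (p1 : Hom P X) (p2 : Hom P Y) :
  is_pullback f g p1 p2 ->
  forall (Q : C) (a b : Hom Q P), p1 ∘ a = p1 ∘ b -> p2 ∘ a = p2 ∘ b -> a = b.
Proof.
  intros [Hc Hu] Q a b H1 H2.
  destruct (Hu Q (p1 ∘ a) (p2 ∘ a)) as [w [_ [_ Hw]]].
  { rewrite !cmp_assoc, Hc. reflexivity. }
  rewrite (Hw a eq_refl eq_refl). symmetry. apply Hw; symmetry; assumption.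
Qed.

Lemma pullback_comparison (X Y Z P P' : C) (f : Hom X Z) (g : Hom Y Z)
    (p1 : Hom P X) (p2 : Hom P Y) (p1' : Hom P' X) (p2' : Hom P' Y) :
  is_pullback f g p1 p2 -> is_pullback f g p1' p2' ->
  exists (phi : Hom P' P) (psi : Hom P P'),
    p1 ∘ phi = p1' /\ p2 ∘ phi = p2' /\ p1' ∘ psi = p1 /\ p2' ∘ psi = p2 /\
    phi ∘ psi = idm P.
Proof.
  intros H H'.
  destruct (proj2 H P' p1' p2' (proj1 H')) as [phi [F1 [F2 _]]].
  destruct (proj2 H' P p1 p2 (proj1 H)) as [psi [S1 [S2 _]]].
  exists phi, psi. repeat split; try assumption.
  apply (pullback_jointly_monic H).
  - rewrite cmp_assoc, F1, S1, cmp_idr. reflexivity.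
  - rewrite cmp_assoc, F2, S2, cmp_idr. reflexivity.
Qed.

Lemma pullback_of_retract (X Y Z P P' : C) (f : Hom X Z) (g : Hom Y Z)
    (p1 : Hom P X) (p2 : Hom P Y) (p1' : Hom P' X) (p2' : Hom P' Y)
    (phi : Hom P' P) (psi : Hom P P') :
  is_pullback f g p1' p2' ->
  p1 ∘ phi = p1' -> p2 ∘ phi = p2' -> p1' ∘ psi = p1 -> p2' ∘ psi = p2 ->
  phi ∘ psi = idm P -> is_pullback f g p1 p2.
Proof.
  intros [Hc Hu] F1 F2 S1 S2 FS. split.
  - rewrite <- S1, <- S2, !cmp_assoc, Hc. reflexivity.
  - intros Q h k Hhk.
    destruct (Hu Q h k Hhk) as [w [W1 [W2 Wu]]].
    exists (phi ∘ w). repeat split.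
    + rewrite cmp_assoc, F1. exact W1.
    + rewrite cmp_assoc, F2. exact W2.
    + intros u U1 U2.
      rewrite <- (cmp_idl u), <- FS, <- cmp_assoc. f_equal.
      apply Wu; rewrite cmp_assoc; [rewrite S1 | rewrite S2]; assumption.
Qed.

Lemma product_iff_pullback (A B T0 P : C) (HT : forall (X : C) (f g : Hom X T0), f = g)
    (a : Hom A T0) (b : Hom B T0) (p1 : Hom P A) (p2 : Hom P B) :
  is_product p1 p2 <-> is_pullback a b p1 p2.
Proof.
  split.
  - intros H. split; [apply HT|]. intros Q h k _. apply H.
  - intros H Q h k. apply (proj2 H). apply HT.
Qed.

Lemma zero_obj_from_unique (Z X : C) : is_zero_obj Z -> forall f g : Hom Z X, f = g.
Proof. intros HZ f g. destruct (HZ X) as [[h Hh] _]. rewrite (Hh f), (Hh g). reflexivity. Qed.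

End CategoryFacts.

(* The data of [centralize] other than the connector: R ×_X S with projections q1, q2,
   the maps l_R, r_S, and the reflexivity maps eR, eS. *)
Definition rel_pullback (C : Cat) (X R S P : C) (d0R d1R : Hom R X) (d0S d1S : Hom S X)
    (eR : Hom X R) (eS : Hom X S) (q1 : Hom P R) (q2 : Hom P S)
    (lR : Hom R P) (rS : Hom S P) : Prop :=
  is_pullback d1R d0S q1 q2 /\
  d0R ∘ eR = idm X /\ d1R ∘ eR = idm X /\ d0S ∘ eS = idm X /\ d1S ∘ eS = idm X /\
  q1 ∘ lR = idm R /\ q2 ∘ lR = eS ∘ d1R /\ q1 ∘ rS = eR ∘ d0S /\ q2 ∘ rS = idm S.

Section RelPullback.
Variables (C : Cat) (HC : IsCat C).
Variables (X R S : C) (d0R d1R : Hom R X) (d0S d1S : Hom S X).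

Lemma centralize_iff :
  centralize d0R d1R d0S d1S <->
  exists (P : C) (q1 : Hom P R) (q2 : Hom P S) (eR : Hom X R) (eS : Hom X S)
         (lR : Hom R P) (rS : Hom S P) (p : Hom P X),
    rel_pullback d0R d1R d0S d1S eR eS q1 q2 lR rS /\ p ∘ lR = d0R /\ p ∘ rS = d1S.
Proof.
  unfold centralize, rel_pullback. split.
  - intros (P & q1 & q2 & eR & eS & lR & rS & p & H).
    exists P, q1, q2, eR, eS, lR, rS, p. tauto.
  - intros (P & q1 & q2 & eR & eS & lR & rS & p & H).
    exists P, q1, q2, eR, eS, lR, rS, p. tauto.
Qed.

Lemma rel_pullback_exists :
  has_pullbacks C -> is_eqrel d0R d1R -> is_eqrel d0S d1S ->
  exists (eR : Hom X R) (eS : Hom X S) (P : C) (q1 : Hom P R) (q2 : Hom P S)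
         (lR : Hom R P) (rS : Hom S P),
    rel_pullback d0R d1R d0S d1S eR eS q1 q2 lR rS.
Proof.
  intros Hpbs (_ & (eR & eR0 & eR1) & _) (_ & (eS & eS0 & eS1) & _).
  destruct (Hpbs _ _ _ d1R d0S) as (P & q1 & q2 & Hpb).
  destruct (proj2 Hpb R (idm R) (eS ∘ d1R)) as (lR & L1 & L2 & _).
  { rewrite (cmp_assoc HC), eS0, (cmp_idl HC), (cmp_idr HC). reflexivity. }
  destruct (proj2 Hpb S (eR ∘ d0S) (idm S)) as (rS & R1 & R2 & _).
  { rewrite (cmp_assoc HC), eR1, (cmp_idl HC), (cmp_idr HC). reflexivity. }
  exists eR, eS, P, q1, q2, lR, rS. split; [exact Hpb | tauto].
Qed.

(* Any two choices of R ×_X S are isomorphic over R and S, and the reflexivity maps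
   are unique, so a connector on one choice transfers to the other. *)
Lemma rel_pullback_connector (P : C) (eR : Hom X R) (eS : Hom X S) (q1 : Hom P R)
    (q2 : Hom P S) (lR : Hom R P) (rS : Hom S P) :
  is_eqrel d0R d1R -> is_eqrel d0S d1S -> centralize d0R d1R d0S d1S ->
  rel_pullback d0R d1R d0S d1S eR eS q1 q2 lR rS ->
  exists p : Hom P X, p ∘ lR = d0R /\ p ∘ rS = d1S.
Proof.
  intros [HR _] [HS _] Hcent (Hpb & eR0 & eR1 & eS0 & eS1 & L1 & L2 & R1 & R2).
  apply centralize_iff in Hcent.
  destruct Hcent as (P' & q1' & q2' & eR' & eS' & lR' & rS' & p' & Hrel' & C1 & C2).
  destruct Hrel' as (Hpb' & eR0' & eR1' & eS0' & eS1' & L1' & L2' & R1' & R2').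
  assert (HeR : eR' = eR) by (apply HR; congruence).
  assert (HeS : eS' = eS) by (apply HS; congruence).
  subst eR' eS'.
  destruct (proj2 Hpb' P q1 q2 (proj1 Hpb)) as (w & W1 & W2 & _).
  assert (WL : w ∘ lR = lR').
  { apply (pullback_jointly_monic HC Hpb'); rewrite (cmp_assoc HC).
    - rewrite W1, L1, L1'. reflexivity.
    - rewrite W2, L2, L2'. reflexivity. }
  assert (WR : w ∘ rS = rS').
  { apply (pullback_jointly_monic HC Hpb'); rewrite (cmp_assoc HC).
    - rewrite W1, R1, R1'. reflexivity.
    - rewrite W2, R2, R2'. reflexivity. }
  exists (p' ∘ w). rewrite <- !(cmp_assoc HC), WL, WR. split; assumption.
Qed.

(* The kernel of q2 factors through lR, and rS is a section of q2; by
   protomodularity they are jointly strongly epic, so any equalizer of two maps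
   agreeing on lR and rS is invertible. *)
Lemma rel_pullback_jointly_epic (P : C) (eR : Hom X R) (eS : Hom X S) (q1 : Hom P R)
    (q2 : Hom P S) (lR : Hom R P) (rS : Hom S P) :
  Pointed C -> Protomodular C -> has_pullbacks C -> has_equalizers C ->
  rel_pullback d0R d1R d0S d1S eR eS q1 q2 lR rS ->
  forall (Y : C) (a b : Hom P Y), a ∘ lR = b ∘ lR -> a ∘ rS = b ∘ rS -> a = b.
Proof.
  intros [Z HZ] HPM Hpbs Heqs (Hpb & _ & _ & eS0 & _ & L1 & L2 & _ & R2) Y a b Hl Hr.
  destruct (HZ S) as [[z _] _].
  destruct (Hpbs _ _ _ q2 z) as (K & k & t & Hk).
  assert (Hker : is_kernel q2 k) by (exists Z, z, t; split; assumption).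
  assert (Hk_lR : lR ∘ (q1 ∘ k) = k).
  { apply (pullback_jointly_monic HC Hpb); rewrite !(cmp_assoc HC).
    - rewrite L1, (cmp_idl HC). reflexivity.
    - rewrite L2, <- (cmp_assoc HC eS d1R q1), (proj1 Hpb), <- !(cmp_assoc HC), (proj1 Hk).
      rewrite !(cmp_assoc HC). f_equal. apply (zero_obj_from_unique HZ). }
  destruct (Heqs _ _ a b) as (M & m & Hm & Ham & Hfac).
  destruct (HPM _ _ q2 rS R2 _ k Hker _ m Hm) as (n & _ & Hmn).
  - apply Hfac. rewrite <- Hk_lR, !(cmp_assoc HC), Hl. reflexivity.
  - apply Hfac. exact Hr.
  - rewrite <- (cmp_idr HC a), <- (cmp_idr HC b), <- Hmn, !(cmp_assoc HC), Ham.
    reflexivity.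
Qed.

End RelPullback.

Section InternalAlgebras.
Variables (E : Cat) (HE : IsCat E) (L : FinLim E) (T : Theory).
Local Notation TA := (TAlg HE L T).

Definition mk_alg (P : E) (u : forall o : Op T, Hom (pow L P (arity o)) P) : IAlg L T :=
  {| car := P; act := u |}.
Arguments mk_alg : clear implicits.

Lemma tuple_comp (X Y Y' : E) n (fs : Fin.t n -> Hom Y X) (h : Hom Y' Y) :
  tuple L fs ∘ h = tuple L (fun i => fs i ∘ h).
Proof.
  apply (proj_ext HE); intros i. rewrite (cmp_assoc HE), !(proj_tuple HE). reflexivity.
Qed.

Lemma proj_powmap (X Y : E) (f : Hom X Y) n (i : Fin.t n) :
  proj L Y i ∘ powmap L f n = f ∘ proj L X i.
Proof. apply (proj_tuple HE). Qed.

Lemma powmap_tuple (X Y Z : E) (f : Hom X Y) n (fs : Fin.t n -> Hom Z X) :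
  powmap L f n ∘ tuple L fs = tuple L (fun i => f ∘ fs i).
Proof.
  apply (proj_ext HE); intros i.
  rewrite (cmp_assoc HE), proj_powmap, <- (cmp_assoc HE), !(proj_tuple HE). reflexivity.
Qed.

Lemma tuple_proj (X : E) n : tuple L (fun i : Fin.t n => proj L X i) = idm (pow L X n).
Proof. apply (proj_ext HE); intros i. rewrite (proj_tuple HE), (cmp_idr HE). reflexivity. Qed.

Lemma alg_hom_interp (A B : IAlg L T) (f : Hom (car A) (car B)) n (t : Term T n) :
  is_alg_hom f -> f ∘ interp A t = interp B t ∘ powmap L f n.
Proof.
  intros Hf. induction t as [i|o ts IH]; simpl.
  - rewrite proj_powmap. reflexivity.
  - rewrite (cmp_assoc HE), Hf, <- (cmp_assoc HE), powmap_tuple, <- (cmp_assoc HE), tuple_comp.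
    f_equal. apply tuple_ext. exact IH.
Qed.

Section JointlyMonicLift.
Variables (P : E) (J : Type) (A : J -> IAlg L T) (p : forall j, Hom P (car (A j)))
  (u : forall o : Op T, Hom (pow L P (arity o)) P).
Hypothesis Hu : forall o j, p j ∘ u o = act (A j) o ∘ powmap L (p j) (arity o).
Hypothesis Hmono : forall (Q : E) (a b : Hom Q P), (forall j, p j ∘ a = p j ∘ b) -> a = b.

Lemma lift_alg_hom j : is_alg_hom (A := mk_alg P u) (B := A j) (p j).
Proof. intros o. apply Hu. Qed.

Lemma lift_satisfies : (forall j, satisfies (A j)) -> satisfies (mk_alg P u).
Proof.
  intros HA n t1 t2 Ht. apply Hmono; intros j.
  rewrite !(alg_hom_interp _ (lift_alg_hom j)), (HA j _ _ _ Ht). reflexivity.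
Qed.

Lemma lift_alg_hom_into (B : IAlg L T) (h : Hom (car B) P) :
  (forall j, is_alg_hom (A := B) (B := A j) (p j ∘ h)) ->
  is_alg_hom (A := B) (B := mk_alg P u) h.
Proof.
  intros Hh o. apply Hmono; intros j. simpl.
  rewrite (cmp_assoc HE), (Hh j o), (cmp_assoc HE), Hu, <- (cmp_assoc HE), <- (powmap_comp HE).
  reflexivity.
Qed.

End JointlyMonicLift.

Lemma pullback_operations (A B : IAlg L T) (Z : E) (f : Hom (car A) Z) (g : Hom (car B) Z)
    (K : E) (k1 : Hom K (car A)) (k2 : Hom K (car B)) :
  is_pullback f g k1 k2 ->
  (forall o, f ∘ (act A o ∘ powmap L k1 _) = g ∘ (act B o ∘ powmap L k2 _)) ->
  exists u : forall o : Op T, Hom (pow L K (arity o)) K, forall o,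
    k1 ∘ u o = act A o ∘ powmap L k1 _ /\ k2 ∘ u o = act B o ∘ powmap L k2 _.
Proof.
  intros Hpb Hc.
  assert (Hex : forall o, exists w : Hom (pow L K (arity o)) K,
    k1 ∘ w = act A o ∘ powmap L k1 _ /\ k2 ∘ w = act B o ∘ powmap L k2 _).
  { intros o. destruct (proj2 Hpb _ _ _ (Hc o)) as (w & W1 & W2 & _). exists w. split; assumption. }
  exists (fun o => proj1_sig (constructive_indefinite_description _ (Hex o))).
  intros o. exact (proj2_sig (constructive_indefinite_description _ (Hex o))).
Qed.

Lemma talg_isCat : IsCat TA.
Proof.
  split; [|split]; intros; apply proj1_sig_inj; simpl.
  - apply (cmp_assoc HE).
  - apply (cmp_idl HE).
  - apply (cmp_idr HE).
Qed.

Lemma talg_pullback_lift (A B D : TA) (f : Hom A D) (g : Hom B D) (P : E)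
    (p1 : Hom P (car (proj1_sig A))) (p2 : Hom P (car (proj1_sig B))) :
  is_pullback (proj1_sig f) (proj1_sig g) p1 p2 ->
  exists (u : forall o : Op T, Hom (pow L P (arity o)) P) (H : satisfies (mk_alg P u))
    (H1 : is_alg_hom (A := mk_alg P u) (B := proj1_sig A) p1)
    (H2 : is_alg_hom (A := mk_alg P u) (B := proj1_sig B) p2),
    is_pullback (C := TA) f g
      (exist _ p1 H1 : Hom (exist _ (mk_alg P u) H : TA) A)
      (exist _ p2 H2 : Hom (exist _ (mk_alg P u) H : TA) B).
Proof.
  intros Hpb.
  destruct A as [A HA], B as [B HB], D as [D HD], f as [f Hf], g as [g Hg]; simpl in *.
  destruct (pullback_operations Hpb) as [u Hu].
  { intros o. rewrite !(cmp_assoc HE), Hf, Hg, <- !(cmp_assoc HE), <- !(powmap_comp HE).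
    rewrite (proj1 Hpb). reflexivity. }
  set (AJ := fun j : bool => if j then A else B).
  set (pj := fun j : bool => if j return Hom P (car (AJ j)) then p1 else p2).
  assert (Hpj : forall o j, pj j ∘ u o = act (AJ j) o ∘ powmap L (pj j) _)
    by (intros o [|]; apply Hu).
  assert (Hmono : forall (Q : E) (a b : Hom Q P), (forall j, pj j ∘ a = pj j ∘ b) -> a = b)
    by (intros Q a b H; apply (pullback_jointly_monic HE Hpb); [apply (H true) | apply (H false)]).
  assert (HAJ : forall j, satisfies (AJ j)) by (intros [|]; assumption).
  exists u, (lift_satisfies Hpj Hmono HAJ), (lift_alg_hom Hpj true), (lift_alg_hom Hpj false).
  split.
  - apply proj1_sig_inj. exact (proj1 Hpb).
  - intros [Q HQ] [h Hh] [k Hk] Hfg. apply (f_equal (@proj1_sig _ _)) in Hfg. simpl in *.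
    destruct (proj2 Hpb _ h k Hfg) as (w & W1 & W2 & Wu).
    assert (Hw : is_alg_hom (A := Q) (B := mk_alg P u) w).
    { apply (lift_alg_hom_into Hpj Hmono).
      intros [|]; simpl; [rewrite W1 | rewrite W2]; assumption. }
    exists (exist _ w Hw). repeat split; try (apply proj1_sig_inj; assumption).
    intros [w' Hw'] E1 E2. apply proj1_sig_inj; simpl.
    apply (f_equal (@proj1_sig _ _)) in E1, E2. apply Wu; assumption.
Qed.

Lemma talg_has_pullbacks : has_pullbacks TA.
Proof.
  intros A B D f g.
  destruct (has_pb L (proj1_sig f) (proj1_sig g)) as (P & p1 & p2 & Hpb).
  destruct (talg_pullback_lift Hpb) as (u & H & H1 & H2 & Hpb').
  eexists; eexists; eexists; exact Hpb'.
Qed.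

Lemma talg_pullback_underlying (A B D P : TA) (f : Hom A D) (g : Hom B D)
    (p1 : Hom P A) (p2 : Hom P B) :
  is_pullback f g p1 p2 ->
  is_pullback (proj1_sig f) (proj1_sig g) (proj1_sig p1) (proj1_sig p2).
Proof.
  intros Hpb.
  destruct (has_pb L (proj1_sig f) (proj1_sig g)) as (P' & q1 & q2 & Hq).
  destruct (talg_pullback_lift Hq) as (u & H & H1 & H2 & Hq').
  destruct (pullback_comparison talg_isCat Hpb Hq') as (phi & psi & F1 & F2 & S1 & S2 & FS).
  apply (f_equal (@proj1_sig _ _)) in F1, F2, S1, S2, FS.
  exact (pullback_of_retract HE Hq F1 F2 S1 S2 FS).
Qed.

Lemma term_hom_unique (Q : E) (f g : Hom Q (term L)) : f = g.
Proof. rewrite (bang_uniq L f), (bang_uniq L g). reflexivity. Qed.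

Definition terminal_alg : IAlg L T := mk_alg (term L) (fun o => bang L _).

Lemma terminal_alg_satisfies : satisfies terminal_alg.
Proof. intros n t1 t2 _. apply term_hom_unique. Qed.

Lemma terminal_alg_hom (B : IAlg L T) : is_alg_hom (A := B) (B := terminal_alg) (bang L _).
Proof. intros o. apply term_hom_unique. Qed.

Lemma talg_zero_carrier_terminal (Z : TA) : is_zero_obj Z ->
  forall Q : E, exists x : Hom Q (car (proj1_sig Z)), forall y, y = x.
Proof.
  intros HZ Q.
  set (Tm := exist _ terminal_alg terminal_alg_satisfies : TA).
  destruct (HZ Tm) as [[a _] [b _]].
  assert (Hba : proj1_sig b ∘ proj1_sig a = idm _).
  { exact (f_equal (@proj1_sig _ _) (zero_obj_from_unique HZ (b ∘ a) (idm Z))). }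
  exists (proj1_sig b ∘ bang L Q). intros y.
  rewrite <- (cmp_idl HE y), <- Hba, <- (cmp_assoc HE). f_equal. apply term_hom_unique.
Qed.

Lemma talg_jointly_monic_underlying (R X Y : TA) (d0 : Hom R X) (d1 : Hom R Y) :
  (forall (Q : TA) (a b : Hom Q R), d0 ∘ a = d0 ∘ b -> d1 ∘ a = d1 ∘ b -> a = b) ->
  forall (Q : E) (a b : Hom Q (car (proj1_sig R))),
    proj1_sig d0 ∘ a = proj1_sig d0 ∘ b -> proj1_sig d1 ∘ a = proj1_sig d1 ∘ b -> a = b.
Proof.
  intros Hjm Q a b Ha Hb.
  set (m := pair L (proj1_sig d0) (proj1_sig d1)).
  destruct (has_pb L m m) as (K & k1 & k2 & Hk).
  assert (Hk12 : pair L (proj1_sig d0 ∘ k1) (proj1_sig d1 ∘ k1)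
               = pair L (proj1_sig d0 ∘ k2) (proj1_sig d1 ∘ k2)).
  { rewrite <- !(pair_comp HE). exact (proj1 Hk). }
  pose proof (f_equal (fun h => pr1 L _ _ ∘ h) Hk12) as H0.
  pose proof (f_equal (fun h => pr2 L _ _ ∘ h) Hk12) as H1.
  simpl in H0, H1. rewrite !(pr1_pair L) in H0. rewrite !(pr2_pair L) in H1.
  destruct (pullback_operations (A := proj1_sig R) (B := proj1_sig R) Hk) as [u Hu].
  { intros o. unfold m. rewrite !(pair_comp HE).
    rewrite !(cmp_assoc HE), (proj2_sig d0 o), (proj2_sig d1 o), <- !(cmp_assoc HE),
      <- !(powmap_comp HE), H0, H1.
    reflexivity. }
  set (pj := fun j : bool => if j then k1 else k2).
  assert (Hpj : forall o j, pj j ∘ u o = act (proj1_sig R) o ∘ powmap L (pj j) _)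
    by (intros o [|]; apply Hu).
  assert (Hmono : forall (Q' : E) (x y : Hom Q' K), (forall j, pj j ∘ x = pj j ∘ y) -> x = y)
    by (intros Q' x y H; apply (pullback_jointly_monic HE Hk); [apply (H true) | apply (H false)]).
  set (Kt := exist _ (mk_alg K u) (lift_satisfies Hpj Hmono (fun _ => proj2_sig R)) : TA).
  set (k1t := @exist _ (is_alg_hom (A := mk_alg K u) (B := proj1_sig R)) k1
                 (lift_alg_hom Hpj true) : Hom Kt R).
  set (k2t := @exist _ (is_alg_hom (A := mk_alg K u) (B := proj1_sig R)) k2
                 (lift_alg_hom Hpj false) : Hom Kt R).
  assert (Hk_eq : k1t = k2t) by (apply Hjm; apply proj1_sig_inj; assumption).
  apply (f_equal (@proj1_sig _ _)) in Hk_eq.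
  destruct (proj2 Hk Q a b) as (w & W1 & W2 & _).
  { unfold m. rewrite !(pair_comp HE), Ha, Hb. reflexivity. }
  rewrite <- W1, <- W2. exact (f_equal (fun h => h ∘ w) Hk_eq).
Qed.

End InternalAlgebras.
Arguments mk_alg {E L T} P u.

Lemma set_proj_powmap (X Y : Type) (f : X -> Y) n (i : Fin.t n) (xs : pow SetFinLim X n) :
  proj SetFinLim Y i (powmap SetFinLim f n xs) = f (proj SetFinLim X i xs).
Proof. exact (equal_f (proj_powmap SetCat_isCat SetFinLim (X := X) (Y := Y) f i) xs). Qed.

Lemma set_pow_ext (X : Type) n (xs ys : pow SetFinLim X n) :
  (forall i, proj SetFinLim X i xs = proj SetFinLim X i ys) -> xs = ys.
Proof.
  intros H.
  assert (Hc : (fun _ : unit => xs) = (fun _ : unit => ys)).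
  { apply (proj_ext SetCat_isCat (L := SetFinLim) (X := X) (Y := unit)). intros i.
    apply functional_extensionality. intros u. apply H. }
  exact (equal_f Hc tt).
Qed.

Lemma set_proj_tuple (X Y : Type) n (i : Fin.t n) (fs : Fin.t n -> Y -> X) (y : Y) :
  proj SetFinLim X i (tuple SetFinLim (X := X) (Y := Y) fs y) = fs i y.
Proof. exact (equal_f (proj_tuple SetCat_isCat SetFinLim (X := X) (Y := Y) i fs) y). Qed.

Definition set_tuple (X : Type) n (xs : Fin.t n -> X) : pow SetFinLim X n :=
  tuple SetFinLim (X := X) (Y := unit) (fun i _ => xs i) tt.

Lemma set_proj_set_tuple (X : Type) n (i : Fin.t n) (xs : Fin.t n -> X) :
  proj SetFinLim X i (set_tuple xs) = xs i.
Proof. apply set_proj_tuple. Qed.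

Notation V T := (Variety T).

Section Variety.
Variable T : Theory.

Lemma variety_isCat : IsCat (V T).
Proof. apply talg_isCat. Qed.

Lemma variety_has_pullbacks : has_pullbacks (V T).
Proof. apply talg_has_pullbacks. Qed.

Lemma vhom_eq (A B : V T) (f g : Hom A B) :
  (forall x, proj1_sig f x = proj1_sig g x) -> f = g.
Proof. intros H. apply proj1_sig_inj, functional_extensionality, H. Qed.

Lemma vhom_app (A B : V T) (f g : Hom A B) :
  f = g -> forall x, proj1_sig f x = proj1_sig g x.
Proof. intros ->; reflexivity. Qed.

Lemma alg_hom_into_subsingleton (A B : IAlg SetFinLim T) (h : car A -> car B) :
  (forall x y : car B, x = y) -> is_alg_hom (A := A) (B := B) h.
Proof. intros Hs o. apply functional_extensionality. intros; apply Hs. Qed.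

(* Pointedness is needed to map a one-element algebra to an arbitrary one. *)
Lemma variety_zero_of_singleton (W : V T) :
  Pointed (V T) -> (exists w0, forall w : car (proj1_sig W), w = w0) -> is_zero_obj W.
Proof.
  intros [Z0 HZ] [w0 Hw0] X.
  assert (Hs : forall x y : car (proj1_sig W), x = y)
    by (intros x y; rewrite (Hw0 x), (Hw0 y); reflexivity).
  destruct (talg_zero_carrier_terminal HZ (unit : SetCat)) as [z Hz].
  assert (HsZ : forall x y : car (proj1_sig Z0), x = y).
  { intros x y.
    exact (f_equal (fun h => h tt) (eq_trans (Hz (fun _ => x)) (eq_sym (Hz (fun _ => y))))). }
  set (c := exist _ (fun _ => z tt) (alg_hom_into_subsingleton _ HsZ) : Hom W Z0).
  set (d := exist _ (fun _ => w0) (alg_hom_into_subsingleton _ Hs) : Hom Z0 W).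
  split.
  - destruct (HZ X) as [[m0 Hm0] _].
    exists (m0 ∘ c). intros g.
    assert (Hdc : d ∘ c = idm W) by (apply vhom_eq; intros; apply Hs).
    rewrite <- (cmp_idr variety_isCat g), <- Hdc, (cmp_assoc variety_isCat), (Hm0 (g ∘ d)).
    reflexivity.
  - exists (exist _ (fun _ => w0) (alg_hom_into_subsingleton _ Hs) : Hom X W).
    intros g. apply vhom_eq. intros; apply Hs.
Qed.

Lemma variety_has_equalizers : has_equalizers (V T).
Proof.
  intros Pv Y a b.
  set (Mc := {w : car (proj1_sig Pv) | proj1_sig a w = proj1_sig b w}).
  set (incl := (fun m : Mc => proj1_sig m) : Hom (Mc : SetCat) (car (proj1_sig Pv))).
  assert (Hcl : forall o (ms : pow SetFinLim Mc (arity o)),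
    proj1_sig a (act (proj1_sig Pv) o (powmap SetFinLim incl _ ms)) =
    proj1_sig b (act (proj1_sig Pv) o (powmap SetFinLim incl _ ms))).
  { intros o ms.
    pose proof (equal_f (proj2_sig a o) (powmap SetFinLim incl _ ms)) as Ha.
    pose proof (equal_f (proj2_sig b o) (powmap SetFinLim incl _ ms)) as Hb.
    simpl in Ha, Hb. etransitivity; [exact Ha|]. etransitivity; [|symmetry; exact Hb].
    simpl. f_equal.
    apply set_pow_ext. intros i. rewrite !set_proj_powmap.
    apply (proj2_sig (proj SetFinLim Mc i ms)). }
  set (uM := (fun o ms => exist _ _ (Hcl o ms) : Mc)
              : forall o, Hom (pow SetFinLim (Mc : SetCat) (arity o)) Mc).
  assert (Hu : forall o (j : unit),
             incl ∘ uM o = act (proj1_sig Pv) o ∘ powmap SetFinLim incl _)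
    by reflexivity.
  assert (Hmono : forall (Q : SetCat) (x y : Hom Q Mc),
                    (forall j : unit, incl ∘ x = incl ∘ y) -> x = y).
  { intros Q x y H. apply functional_extensionality. intros q.
    apply proj1_sig_inj. exact (equal_f (H tt) q). }
  set (Mt := exist _ (mk_alg (Mc : SetCat) uM)
               (lift_satisfies SetCat_isCat (A := fun _ => proj1_sig Pv) (p := fun _ => incl)
                  Hu Hmono (fun _ => proj2_sig Pv)) : V T).
  set (m := exist _ incl (lift_alg_hom (A := fun _ => proj1_sig Pv) (p := fun _ => incl) Hu tt)
            : Hom Mt Pv).
  exists Mt, m. split; [|split].
  - intros Q x y Hxy. apply vhom_eq. intros q. apply proj1_sig_inj. exact (vhom_app Hxy q).
  - apply vhom_eq. intros [w Hw]. exact Hw.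
  - intros W x Hx.
    set (y := (fun w => exist _ (proj1_sig x w) (vhom_app Hx w) : Mc)
              : Hom (car (proj1_sig W)) (Mc : SetCat)).
    exists (exist _ y (lift_alg_hom_into SetCat_isCat (A := fun _ => proj1_sig Pv)
                         (p := fun _ => incl) Hu Hmono (h := y) (fun _ => proj2_sig x))).
    apply vhom_eq. reflexivity.
Qed.

End Variety.

Section HomFunctor.
Variables (E : Cat) (HE : IsCat E) (L : FinLim E) (T : Theory).
Local Notation TA := (TAlg HE L T).

Definition hom_alg (Q : E) (A : IAlg L T) : IAlg SetFinLim T :=
  @mk_alg SetCat SetFinLim T (Hom Q (car A))
    (fun o xs => act A o ∘ tuple L (fun i => proj SetFinLim (Hom Q (car A)) i xs)).

Lemma hom_alg_interp (Q : E) (A : IAlg L T) n (t : Term T n) xs :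
  interp (hom_alg Q A) t xs = interp A t ∘ tuple L (fun i => proj SetFinLim _ i xs).
Proof.
  induction t as [i|o ts IH]; simpl.
  - symmetry. apply (proj_tuple HE).
  - rewrite <- (cmp_assoc HE), (tuple_comp HE). f_equal. apply tuple_ext. intros i.
    rewrite set_proj_tuple. apply IH.
Qed.

Lemma hom_alg_satisfies (Q : E) (A : IAlg L T) : satisfies A -> satisfies (hom_alg Q A).
Proof.
  intros H n t1 t2 Ht. apply functional_extensionality. intros xs.
  rewrite !hom_alg_interp, (H _ _ _ Ht). reflexivity.
Qed.

Definition homF_ob (Q : E) (A : TA) : V T :=
  exist _ (hom_alg Q (proj1_sig A)) (hom_alg_satisfies Q (proj2_sig A)).

Lemma homF_map_alg_hom (Q : E) (A B : IAlg L T) (f : Hom (car A) (car B)) :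
  is_alg_hom f -> is_alg_hom (A := hom_alg Q A) (B := hom_alg Q B) (fun x => f ∘ x).
Proof.
  intros Hf o. apply functional_extensionality. intros xs. simpl.
  rewrite (cmp_assoc HE), Hf, <- (cmp_assoc HE), (powmap_tuple HE). f_equal.
  apply tuple_ext. intros i. rewrite set_proj_powmap. reflexivity.
Qed.

Definition homF_map (Q : E) (A B : TA) (f : Hom A B) : Hom (homF_ob Q A) (homF_ob Q B) :=
  exist _ (fun x => proj1_sig f ∘ x) (homF_map_alg_hom Q (proj2_sig f)).

Lemma homF_pre_alg_hom (Q Q' : E) (g : Hom Q' Q) (A : IAlg L T) :
  is_alg_hom (A := hom_alg Q A) (B := hom_alg Q' A) (fun x => x ∘ g).
Proof.
  intros o. apply functional_extensionality. intros xs. simpl.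
  rewrite <- (cmp_assoc HE), (tuple_comp HE). f_equal.
  apply tuple_ext. intros i. rewrite set_proj_powmap. reflexivity.
Qed.

Definition homF_pre (Q Q' : E) (g : Hom Q' Q) (A : TA) : Hom (homF_ob Q A) (homF_ob Q' A) :=
  exist _ (fun x => x ∘ g) (homF_pre_alg_hom g (proj1_sig A)).

Lemma homF_map_comp (Q : E) (A B D : TA) (f : Hom A B) (g : Hom B D) :
  homF_map Q (g ∘ f) = homF_map Q g ∘ homF_map Q f.
Proof. apply vhom_eq. intros x. simpl. symmetry. apply (cmp_assoc HE). Qed.

Lemma homF_map_id (Q : E) (A : TA) : homF_map Q (idm A) = idm (homF_ob Q A).
Proof. apply vhom_eq. intros x. simpl. apply (cmp_idl HE). Qed.

Lemma homF_pre_natural (Q Q' : E) (g : Hom Q' Q) (A B : TA) (f : Hom A B) :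
  homF_pre g B ∘ homF_map Q f = homF_map Q' f ∘ homF_pre g A.
Proof. apply vhom_eq. intros x. simpl. symmetry. apply (cmp_assoc HE). Qed.

Lemma homF_faithful (A B : TA) (f g : Hom A B) :
  homF_map (car (proj1_sig A)) f = homF_map _ g -> f = g.
Proof.
  intros H. apply proj1_sig_inj.
  rewrite <- (cmp_idr HE (proj1_sig f)), <- (cmp_idr HE (proj1_sig g)).
  exact (vhom_app H (idm _)).
Qed.

Lemma hom_alg_pointwise_factor (Q : E) (P A : IAlg L T) (p : Hom (car P) (car A))
    (W : IAlg SetFinLim T) (h : car W -> Hom Q (car A)) (U : car W -> Hom Q (car P)) :
  is_alg_hom p -> is_alg_hom (A := W) (B := hom_alg Q A) h -> (forall w, p ∘ U w = h w) ->
  forall o ws, p ∘ U (act W o ws) = p ∘ act (hom_alg Q P) o (powmap SetFinLim U _ ws).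
Proof.
  intros Hp Hh HU o ws.
  rewrite HU. pose proof (equal_f (Hh o) ws) as Ehw. simpl in Ehw. rewrite Ehw. simpl.
  rewrite (cmp_assoc HE), (Hp o), <- (cmp_assoc HE), (powmap_tuple HE).
  f_equal. apply tuple_ext. intros i. rewrite !set_proj_powmap. symmetry. apply HU.
Qed.

Lemma homF_pullback (Q : E) (A B D P : TA) (f : Hom A D) (g : Hom B D)
    (p1 : Hom P A) (p2 : Hom P B) :
  is_pullback f g p1 p2 ->
  is_pullback (homF_map Q f) (homF_map Q g) (homF_map Q p1) (homF_map Q p2).
Proof.
  intros Hpb. pose proof (talg_pullback_underlying Hpb) as HpbE. split.
  - rewrite <- !homF_map_comp, (proj1 Hpb). reflexivity.
  - intros W h k Hhk.
    destruct (choice (fun w x =>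
                proj1_sig p1 ∘ x = proj1_sig h w /\ proj1_sig p2 ∘ x = proj1_sig k w))
      as [U HU].
    { intros w. destruct (proj2 HpbE Q _ _ (vhom_app Hhk w)) as (x & X1 & X2 & _).
      exists x. split; assumption. }
    assert (HUhom : is_alg_hom (A := proj1_sig W) (B := hom_alg Q (proj1_sig P)) U).
    { intros o. apply functional_extensionality. intros ws.
      apply (pullback_jointly_monic HE HpbE).
      - apply (hom_alg_pointwise_factor (proj2_sig p1) (proj2_sig h)). apply HU.
      - apply (hom_alg_pointwise_factor (proj2_sig p2) (proj2_sig k)). apply HU. }
    exists (exist _ U HUhom). repeat split; try (apply vhom_eq; intros w; apply HU).
    intros U' U1 U2. apply vhom_eq. intros w. simpl.
    apply (pullback_jointly_monic HE HpbE).
    + rewrite (proj1 (HU w)). exact (vhom_app U1 w).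
    + rewrite (proj2 (HU w)). exact (vhom_app U2 w).
Qed.

Lemma homF_zero (Q : E) (Z : TA) :
  Pointed (V T) -> is_zero_obj Z -> is_zero_obj (homF_ob Q Z).
Proof.
  intros HP HZ. apply (variety_zero_of_singleton HP). exact (talg_zero_carrier_terminal HZ Q).
Qed.

Lemma homF_zero_mor (Q : E) (A B : TA) (f : Hom A B) :
  Pointed (V T) -> is_zero_mor f -> is_zero_mor (homF_map Q f).
Proof.
  intros HP (Z & a & b & HZ & ->). exists (homF_ob Q Z), (homF_map Q a), (homF_map Q b).
  split; [apply homF_zero; assumption | apply homF_map_comp].
Qed.

(* Binary products are pullbacks over the terminal algebra. *)
Lemma homF_product (Q : E) (A B P : TA) (p1 : Hom P A) (p2 : Hom P B) :
  is_product p1 p2 -> is_product (homF_map Q p1) (homF_map Q p2).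
Proof.
  intros Hp.
  set (Tm := exist _ (terminal_alg L T) (@terminal_alg_satisfies _ L T) : TA).
  set (to_Tm := fun X : TA => exist _ (bang L _) (terminal_alg_hom (proj1_sig X)) : Hom X Tm).
  assert (HT : forall (X : TA) (f g : Hom X Tm), f = g)
    by (intros; apply proj1_sig_inj, term_hom_unique).
  assert (HFT : forall (X : V T) (f g : Hom X (homF_ob Q Tm)), f = g)
    by (intros; apply vhom_eq; intros; apply term_hom_unique).
  apply (product_iff_pullback HT (to_Tm A) (to_Tm B)) in Hp.
  apply (product_iff_pullback HFT (homF_map Q (to_Tm A)) (homF_map Q (to_Tm B))).
  exact (homF_pullback Q Hp).
Qed.

Lemma homF_cooperate (Q : E) (U W X : TA) (u : Hom U X) (v : Hom W X) :
  Pointed (V T) -> cooperate u v -> cooperate (homF_map Q u) (homF_map Q v).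
Proof.
  intros HP (P & p1 & p2 & m1 & m2 & phi & Hprod & E1 & Z1 & Z2 & E2 & E3 & E4).
  exists (homF_ob Q P), (homF_map Q p1), (homF_map Q p2), (homF_map Q m1), (homF_map Q m2),
    (homF_map Q phi).
  rewrite <- !homF_map_comp, E1, E2, E3, E4, !homF_map_id.
  split; [apply homF_product; exact Hprod|].
  repeat split; apply homF_zero_mor; assumption.
Qed.

Lemma homF_eqrel (Q : E) (X R : TA) (d0 d1 : Hom R X) :
  is_eqrel d0 d1 -> is_eqrel (homF_map Q d0) (homF_map Q d1).
Proof.
  intros H. pose proof H as (Hjm & (r & R0 & R1) & (s & S0 & S1) & Htr).
  split; [|split; [|split]].
  - intros W a b Ha Hb. apply vhom_eq. intros x.
    apply (talg_jointly_monic_underlying Hjm); [exact (vhom_app Ha x) | exact (vhom_app Hb x)].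
  - exists (homF_map Q r). rewrite <- !homF_map_comp, R0, R1, homF_map_id. split; reflexivity.
  - exists (homF_map Q s). rewrite <- !homF_map_comp, S0, S1. split; reflexivity.
  - intros Pv p1 p2 Hpv.
    destruct (talg_has_pullbacks d1 d0) as (K & k1 & k2 & Hk).
    destruct (Htr _ _ _ Hk) as (t & T0 & T1).
    destruct (proj2 (homF_pullback Q Hk) Pv p1 p2 (proj1 Hpv)) as (w & W1 & W2 & _).
    exists (homF_map Q t ∘ w).
    rewrite !(cmp_assoc (variety_isCat T)), <- !homF_map_comp, T0, T1, !homF_map_comp,
      <- !(cmp_assoc (variety_isCat T)), W1, W2.
    split; reflexivity.
Qed.

Lemma homF_rel_pullback (Q : E) (X R S P : TA) (d0R d1R : Hom R X) (d0S d1S : Hom S X)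
    (eR : Hom X R) (eS : Hom X S) (q1 : Hom P R) (q2 : Hom P S) (lR : Hom R P) (rS : Hom S P) :
  rel_pullback d0R d1R d0S d1S eR eS q1 q2 lR rS ->
  rel_pullback (homF_map Q d0R) (homF_map Q d1R) (homF_map Q d0S) (homF_map Q d1S)
    (homF_map Q eR) (homF_map Q eS) (homF_map Q q1) (homF_map Q q2)
    (homF_map Q lR) (homF_map Q rS).
Proof.
  intros (Hpb & H).
  split; [exact (homF_pullback Q Hpb)|].
  repeat split; rewrite <- ?homF_map_comp, <- ?homF_map_id; f_equal; tauto.
Qed.

(* Yoneda: a family of homomorphisms between the hom-algebras, natural in the
   stage, is induced by a single homomorphism, namely its value at the identity. *)
Lemma homF_natural_family_induced (A B : TA)
    (Conn : forall Q : E, Hom (homF_ob Q A) (homF_ob Q B) -> Prop) :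
  (forall Q, exists c, Conn Q c) ->
  (forall Q Q' (g : Hom Q' Q) c c', Conn Q c -> Conn Q' c' ->
     c' ∘ homF_pre g A = homF_pre g B ∘ c) ->
  exists f : Hom A B, forall Q c, Conn Q c -> c = homF_map Q f.
Proof.
  intros Hex Hnat.
  set (QA := car (proj1_sig A)).
  destruct (Hex QA) as [c0 Hc0].
  set (f := proj1_sig c0 (idm QA)).
  assert (Hf : forall Q c, Conn Q c -> forall x, proj1_sig c x = f ∘ x).
  { intros Q c Hc x.
    pose proof (vhom_app (Hnat QA Q x c0 c Hc0 Hc) (idm QA)) as e. simpl in e.
    rewrite (cmp_idl HE) in e. exact e. }
  assert (Hfhom : is_alg_hom f).
  { intros o.
    destruct (Hex (pow L QA (arity o))) as [cn Hcn].
    set (xs := set_tuple (fun i : Fin.t (arity o) => proj L QA i)).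
    assert (Hxs : act (proj1_sig A) o = act (hom_alg _ (proj1_sig A)) o xs).
    { simpl. rewrite <- (cmp_idr HE (act _ o)) at 1. f_equal.
      rewrite <- (tuple_proj HE). apply tuple_ext. intros i.
      unfold xs. rewrite set_proj_set_tuple. reflexivity. }
    rewrite <- (Hf _ _ Hcn), Hxs.
    etransitivity; [exact (equal_f (proj2_sig cn o) xs)|]. simpl.
    unfold powmap. f_equal. apply tuple_ext. intros i.
    rewrite set_proj_tuple. unfold xs. simpl. rewrite set_proj_set_tuple. apply Hf, Hcn. }
  exists (exist _ f Hfhom). intros Q c Hc. apply vhom_eq. exact (Hf Q c Hc).
Qed.

End HomFunctor.

Section Connector.
Variables (T : Theory) (HP : Pointed (V T)) (HPM : Protomodular (V T)) (HSv : HuqSmith (V T)).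
Variables (E : Cat) (HE : IsCat E) (L : FinLim E).
Local Notation TA := (TAlg HE L T).
Variables (X R S : TA) (d0R d1R : Hom R X) (d0S d1S : Hom S X).
Hypotheses (HR : is_eqrel d0R d1R) (HS : is_eqrel d0S d1S).
Variables (Z : TA) (zX : Hom Z X) (IR IS : TA) (xR : Hom IR R) (tR : Hom IR Z)
  (xS : Hom IS S) (tS : Hom IS Z).
Hypotheses (HZ : is_zero_obj Z) (HIR : is_pullback d0R zX xR tR)
  (HIS : is_pullback d0S zX xS tS) (Hco : cooperate (d1R ∘ xR) (d1S ∘ xS)).
Variables (eR : Hom X R) (eS : Hom X S) (P : TA) (q1 : Hom P R) (q2 : Hom P S)
  (lR : Hom R P) (rS : Hom S P).
Hypothesis Hrel : rel_pullback d0R d1R d0S d1S eR eS q1 q2 lR rS.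

Definition is_connector_at (Q : E) (c : Hom (homF_ob Q P) (homF_ob Q X)) : Prop :=
  c ∘ homF_map Q lR = homF_map Q d0R /\ c ∘ homF_map Q rS = homF_map Q d1S.
Arguments is_connector_at : clear implicits.

Lemma connector_at_exists (Q : E) : exists c, is_connector_at Q c.
Proof.
  assert (Hcent :
    centralize (homF_map Q d0R) (homF_map Q d1R) (homF_map Q d0S) (homF_map Q d1S)).
  { apply (HSv (homF_eqrel Q HR) (homF_eqrel Q HS) (homF_zero Q HP HZ)
             (homF_pullback Q HIR) (homF_pullback Q HIS)).
    rewrite <- !homF_map_comp. exact (homF_cooperate Q HP Hco). }
  exact (rel_pullback_connector (variety_isCat T) (homF_eqrel Q HR) (homF_eqrel Q HS) Hcent
           (homF_rel_pullback Q Hrel)).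
Qed.

Lemma connectors_natural (Q Q' : E) (g : Hom Q' Q) (c : Hom (homF_ob Q P) (homF_ob Q X))
    (c' : Hom (homF_ob Q' P) (homF_ob Q' X)) :
  is_connector_at Q c -> is_connector_at Q' c' -> c' ∘ homF_pre g P = homF_pre g X ∘ c.
Proof.
  intros [Hc1 Hc2] [Hc1' Hc2'].
  pose proof (variety_isCat T) as VC.
  apply (rel_pullback_jointly_epic VC HP HPM (@variety_has_pullbacks T)
           (@variety_has_equalizers T) (homF_rel_pullback Q Hrel)).
  - rewrite <- !(cmp_assoc VC), Hc1, !homF_pre_natural, (cmp_assoc VC), Hc1'. reflexivity.
  - rewrite <- !(cmp_assoc VC), Hc2, !homF_pre_natural, (cmp_assoc VC), Hc2'. reflexivity.
Qed.

Lemma connector_induced : exists p : Hom P X, p ∘ lR = d0R /\ p ∘ rS = d1S.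
Proof.
  destruct (homF_natural_family_induced connector_at_exists connectors_natural) as [p Hp].
  exists p. split; apply homF_faithful.
  - destruct (connector_at_exists (car (proj1_sig R))) as [c Hc].
    rewrite homF_map_comp, <- (Hp _ _ Hc). exact (proj1 Hc).
  - destruct (connector_at_exists (car (proj1_sig S))) as [c Hc].
    rewrite homF_map_comp, <- (Hp _ _ Hc). exact (proj2 Hc).
Qed.

End Connector.

Theorem theorem3p8 (T : Theory) :
  Pointed (Variety T) -> Protomodular (Variety T) ->
  HuqSmith (Variety T) ->
  forall (E : Cat) (HE : IsCat E) (L : FinLim E), HuqSmith (TAlg HE L T).
Proof.
  intros HP HPM HSv E HE L X R S d0R d1R d0S d1S HR HS Z zX HZ IR xR tR HIR IS xS tS HIS Hco.
  destruct (rel_pullback_exists (talg_isCat HE L T) (@talg_has_pullbacks _ HE L T) HR HS)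
    as (eR & eS & P & q1 & q2 & lR & rS & Hrel).
  destruct (connector_induced HP HPM HSv HR HS HZ HIR HIS Hco Hrel) as (p & Hp1 & Hp2).
  apply centralize_iff. exists P, q1, q2, eR, eS, lR, rS, p. tauto.
Qed.
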